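(* Let $n\ge 3$ and consider the cycle graph on nodes $1,\dots,n$ with arbitrary measurements $\widetilde{R}_{12},\dots,\widetilde{R}_{n-1,n},\widetilde{R}_{n1}\in\mathrm{SO}(3)$. For each $k\in\{0,\dots,n-1\}$, the point $R=(R_1,\dots,R_n)$ with $R_1=I_3$ and $$R_i=\Big(\prod_{s=1}^{i-1}\widetilde{R}_{s,s+1}\Big)^{\top}E_k^{\,i-1},\qquad i\in\{2,\dots,n\},$$ is a stationary point of $f$ on $\mathrm{SO}(3)^n$, and at this point $f(R)=-3n-2n\operatorname{Tr}(E_k)=-3n-2n\big(1+2\cos(\gamma/n-2k\pi/n)\big)$.
   Context: Cycle-graph rotation averaging setup. Let $n\ge 3$. The cycle graph has nodes $1,\dots,n$ and edges $\{i,i+1\}$ for $i=1,\dots,n-1$ together with $\{n,1\}$; write $i\sim j$ if $\{i,j\}$ is an edge. Each edge carries a measured rotation $\widetilde{R}_{ij}\in\mathrm{SO}(3)$, with the convention $\widetilde{R}_{ji}=\widetilde{R}_{ij}^\top$. Define the symmetric $3n\times 3n$ block matrix $\widetilde{R}$ whose $(i,j)$ $3\times3$ block is $I_3$ if $i=j$, $\widetilde{R}_{ij}$ if $i\sim j$, and $0$ otherwise. For $R=(R_1,\dots,R_n)\in\mathrm{SO}(3)^n$, write $R=[R_1^\top\ \cdots\ R_n^\top]^\top\in\mathbb{R}^{3n\times 3}$ and define $f(R):=-\operatorname{Tr}(R^\top\widetilde{R}R)$; the rotation averaging problem is to minimize $f$ over $\mathrm{SO}(3)^n$. The cycle error is $E:=\widetilde{R}_{12}\widetilde{R}_{23}\cdots\widetilde{R}_{n-1,n}\widetilde{R}_{n1}\in\mathrm{SO}(3)$.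 Write $E=\exp(\gamma[\hat n]_\times)$ with unit axis $\hat n$ and angle $\gamma=\angle(E)\in[-\pi,\pi]$. For $k\in\{0,\dots,n-1\}$, $E_k:=\exp\big((\gamma/n-2k\pi/n)[\hat n]_\times\big)$. *)

From HB Require Import structures.
From mathcomp Require Import all_boot all_order all_algebra.
From mathcomp Require Import all_classical all_reals all_analysis.
Set Implicit Arguments. Unset Strict Implicit. Unset Printing Implicit Defensive.
Import Order.TTheory GRing.Theory Num.Theory.
Import numFieldNormedType.Exports.
Local Open Scope ring_scope.

(* Nodes 1..n of the paper are the ordinals 0..n-1 of 'I_n.
   Edge {i, i+1} (cyclically, {n,1}) is {i, ordS i}. *)

Section CycleRA.
Variable R : realType.

Definition SO3 (Q : 'M[R]_3) : Prop := Q^T *m Q = 1%:M /\ \det Q = 1.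

Definition hat (v : 'cV[R]_3) : 'M[R]_3 :=
  \matrix_(i < 3, j < 3)
    (if (i == 0 :> nat) && (j == 1 :> nat) then - v 2%:R 0
     else if (i == 0 :> nat) && (j == 2 :> nat) then v 1%:R 0
     else if (i == 1 :> nat) && (j == 0 :> nat) then v 2%:R 0
     else if (i == 1 :> nat) && (j == 2 :> nat) then - v 0 0
     else if (i == 2 :> nat) && (j == 0 :> nat) then - v 1%:R 0
     else if (i == 2 :> nat) && (j == 1 :> nat) then v 0 0
     else 0).

(* exp(theta [u]_x) for a unit axis u, in closed (Rodrigues) form:
   exp(theta K) = I + sin theta K + (1 - cos theta) K^2  (K = [u]_x, |u| = 1). *)
Definition expso3 (u : 'cV[R]_3) (theta : R) : 'M[R]_3 :=
  1%:M + sin theta *: hat u + (1 - cos theta) *: (hat u *m hat u).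

Definition unit_vec (u : 'cV[R]_3) : Prop := \sum_(i < 3) u i 0 ^+ 2 = 1.

Variable n : nat.

(* meas i = R~_{i,i+1} (indices cyclic; meas (n-1) = R~_{n,1}) *)
(* (i,j) block of the 3n x 3n matrix R~ *)
Definition Rtilde_blk (meas : 'I_n -> 'M[R]_3) (i j : 'I_n) : 'M[R]_3 :=
  if i == j then 1%:M
  else if j == ordS i then meas i
  else if i == ordS j then (meas j)^T
  else 0.

(* f(R) = - Tr(R^T R~ R), with R = [R_1^T ... R_n^T]^T, written blockwise *)
Definition cost (meas : 'I_n -> 'M[R]_3) (X : 'I_n -> 'M[R]_3) : R :=
  - \sum_(i < n) \sum_(j < n) \tr ((X i)^T *m Rtilde_blk meas i j *m X j).

Definition cycle_error (meas : 'I_n -> 'M[R]_3) : 'M[R]_3 :=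
  \prod_(i < n) meas i.

Definition skew (W : 'M[R]_3) : Prop := W^T = - W.

(* Stationary point of g on SO(3)^n: X in SO(3)^n, and the directional
   derivative of g at X vanishes along every tangent vector
   V = (X_i W_i)_i, W_i skew (tangent space of SO(3)^n at X). *)
Definition stationary (g : ('I_n -> 'M[R]_3) -> R) (X : 'I_n -> 'M[R]_3) : Prop :=
  (forall i, SO3 (X i)) /\
  forall W : 'I_n -> 'M[R]_3, (forall i, skew (W i)) ->
    is_derive (0 : R) (1 : R)
      (fun t : R => g (fun i => X i + t *: (X i *m W i))) 0.

Definition candidate (meas : 'I_n -> 'M[R]_3) (Ek : 'M[R]_3) (i : 'I_n) : 'M[R]_3 :=
  if i == 0 :> nat then 1%:M
  else (\prod_(s < n | (s < i)%N) meas s)^T *m (Ek ^+ i).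

End CycleRA.

From Pilot Require Import Defs.
From HB Require Import structures.
From mathcomp Require Import all_boot all_order all_algebra.
From mathcomp Require Import all_classical all_reals all_analysis.
Import Order.TTheory GRing.Theory Num.Theory.
Import numFieldNormedType.Exports.
From mathcomp Require Import ring lra zify.
Set Implicit Arguments.
Unset Strict Implicit.
Unset Printing Implicit Defensive.
Local Open Scope ring_scope.

(* The argument is a gauge change.  Let P_i be the path product
   R~_{12} ... R~_{i-1,i} and X_i = P_i^T E_k^(i-1) the candidate point.
   Since P_n R~_{n1} = E = E_k^n, every edge block of the cost becomes
   constant:  X_i^T R~_{i,i+1} X_{i+1} = E_k, also across the closing edge.
   Hence X^T R~ X is the block circulant matrix with identity on the
   diagonal and E_k, E_k^T on the two neighbouring diagonals, whose block row
   and column sums all equal the symmetric matrix S = I + E_k + E_k^T.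
   This gives the value f(X) = -n Tr S = -3n - 2n Tr E_k, and along a tangent
   curve X_i (I + t W_i), W_i skew, the first-order term is a sum of traces
   Tr(S W_i), which vanish since S is symmetric and W_i skew. *)

Section Rodrigues.
Variable R : realType.
Variable u : 'cV[R]_3.
Local Notation K := (hat u).
Local Notation sqnorm := (u 0 0 ^+ 2 + u 1%:R 0 ^+ 2 + u 2%:R 0 ^+ 2).

Lemma unit_vecE : unit_vec u -> sqnorm = 1.
Proof.
rewrite /unit_vec !big_ord_recr big_ord0 /= add0r => <-.
by congr (u _ 0 ^+ 2 + u _ 0 ^+ 2 + u _ 0 ^+ 2); apply/val_inj.
Qed.

Lemma hat_skew : K^T = - K.
Proof.
apply/matrixP => i j; rewrite !mxE.
by case: i => [[|[|[|?]]] ?]; case: j => [[|[|[|?]]] ?] //=; rewrite ?opprK ?oppr0.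
Qed.

Lemma hat_cube : K *m K *m K = - sqnorm *: K.
Proof.
apply/matrixP => i j; rewrite !mxE !big_ord_recr big_ord0 /= !mxE.
rewrite !big_ord_recr !big_ord0 /= !mxE.
by case: i => [[|[|[|?]]] ?]; case: j => [[|[|[|?]]] ?] //=; ring.
Qed.

Lemma mxtrace_hat : \tr K = 0.
Proof. by rewrite /mxtrace !big_ord_recr big_ord0 /= !mxE /= !addr0. Qed.

Lemma mxtrace_hat2 : \tr (K *m K) = - 2 * sqnorm.
Proof.
rewrite /mxtrace !big_ord_recr big_ord0 /= !mxE.
by rewrite !big_ord_recr !big_ord0 /= !mxE /=; ring.
Qed.

(* The Rodrigues formula as a polynomial evaluated at K; products of such
   polynomials differ from the polynomial of the sum angle by a multiple
   of X^3 + X, the annihilator of K for a unit axis. *)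
Definition rodrigues_poly (a : R) : {poly R} :=
  1 + (sin a)%:P * 'X + (1 - cos a)%:P * 'X^2.

Lemma expso3_horner a : expso3 u a = horner_mx K (rodrigues_poly a).
Proof.
rewrite /rodrigues_poly /expso3 !mul_polyC !rmorphD /= !linearZ /= rmorph1.
by rewrite horner_mx_X -[1 in RHS]polyC1 horner_mx_C rmorphXn /= horner_mx_X expr2.
Qed.

Lemma rodrigues_polyM a b : rodrigues_poly a * rodrigues_poly b =
  rodrigues_poly (a + b) +
  ((sin a * (1 - cos b) + (1 - cos a) * sin b)%:P
    + ((1 - cos a) * (1 - cos b))%:P * 'X) * ('X^3 + 'X).
Proof. by rewrite /rodrigues_poly sinD cosD !(polyCD, polyCM, polyCN, polyCB); ring. Qed.

Hypothesis hu : unit_vec u.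

Lemma hat_annihilator : horner_mx K ('X^3 + 'X) = 0.
Proof.
rewrite rmorphD rmorphXn /= horner_mx_X !exprS expr0 mulr1 mulrA.
by have := hat_cube; rewrite !mulmxE => ->; rewrite unit_vecE // scaleN1r addNr.
Qed.

Lemma expso3D a b : expso3 u a *m expso3 u b = expso3 u (a + b).
Proof.
rewrite !expso3_horner mulmxE -rmorphM /= rodrigues_polyM.
by rewrite rmorphD rmorphM /= hat_annihilator mulr0 addr0.
Qed.

Lemma expso3_0 : expso3 u 0 = 1%:M.
Proof. by rewrite /expso3 sin0 cos0 subrr !scale0r !addr0. Qed.

Lemma expso3_tr a : (expso3 u a)^T = expso3 u (- a).
Proof.
rewrite /expso3 !linearD /= !linearZ /= trmx1 trmx_mul hat_skew mulNmx mulmxN.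
by rewrite opprK sinN cosN scaleNr scalerN.
Qed.

Lemma expso3_orth a : (expso3 u a)^T *m expso3 u a = 1%:M.
Proof. by rewrite expso3_tr expso3D addNr expso3_0. Qed.

Lemma expso3X a (m : nat) : expso3 u a ^+ m = expso3 u (m%:R * a).
Proof.
elim: m => [|m IH]; first by rewrite expr0 mul0r expso3_0.
by rewrite exprS IH -mulmxE expso3D -{1}(mul1r a) -mulrDl -natr1 addrC.
Qed.

(* The determinant is a square (of the half-angle determinant) equal to +-1. *)
Lemma expso3_det a : \det (expso3 u a) = 1.
Proof.
have det_sq b : \det (expso3 u b) ^+ 2 = 1.
  by rewrite expr2 -{1}det_tr -det_mulmx expso3_orth det1.
by rewrite [a]splitr -expso3D det_mulmx -expr2 det_sq.
Qed.

Lemma expso3_trace a : \tr (expso3 u a) = 1 + 2 * cos a.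
Proof.
rewrite /expso3 !mxtraceD !mxtraceZ mxtrace1 mxtrace_hat mxtrace_hat2 unit_vecE //.
by rewrite mulr0 addr0; ring.
Qed.

End Rodrigues.

Section Orthogonal.
Variables (F : comUnitRingType) (m : nat).
Implicit Types Q : 'M[F]_m.

Definition orthogonal Q : Prop := Q^T *m Q = 1%:M.

Lemma orthogonal_mulC Q : orthogonal Q -> Q *m Q^T = 1%:M.
Proof. exact: mulmx1C. Qed.

Lemma orthogonal1 : orthogonal 1%:M.
Proof. by rewrite /orthogonal trmx1 mul1mx. Qed.

Lemma orthogonalM P Q : orthogonal P -> orthogonal Q -> orthogonal (P *m Q).
Proof. by rewrite /orthogonal trmx_mul => hP hQ; rewrite -mulmxA (mulmxA P^T) hP mul1mx. Qed.

Lemma orthogonalX Q k : orthogonal Q -> orthogonal (Q ^+ k).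
Proof.
move=> hQ; elim: k => [|k IH]; first by rewrite expr0; exact: orthogonal1.
by rewrite exprS -mulmxE; apply: orthogonalM.
Qed.

Lemma orthogonal_tr Q : orthogonal Q -> orthogonal Q^T.
Proof. by rewrite /orthogonal trmxK; exact: orthogonal_mulC. Qed.

End Orthogonal.

Lemma mxtrace_sym_skew (R : realFieldType) (m : nat) (S W : 'M[R]_m) :
  S^T = S -> W^T = - W -> \tr (S *m W) = 0.
Proof.
move=> hS hW; have : \tr (S *m W) = - \tr (S *m W).
  by rewrite -[LHS]mxtrace_tr trmx_mul hS hW mulNmx linearN /= [in LHS]mxtrace_mulC.
lra.
Qed.

Lemma mxtrace_expand (R : comPzRingType) (m : nat) (Xi Xj Wi Wj B : 'M[R]_m) (t : R) :
  \tr ((Xi + t *: (Xi *m Wi))^T *m B *m (Xj + t *: (Xj *m Wj))) =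
  \tr (Xi^T *m B *m Xj)
  + t * (\tr (Wi^T *m (Xi^T *m B *m Xj)) + \tr (Xi^T *m B *m Xj *m Wj))
  + t ^+ 2 * \tr (Wi^T *m (Xi^T *m B *m Xj) *m Wj).
Proof.
rewrite [(_ + _)^T]linearD /= [(_ *: _)^T]linearZ /= trmx_mul.
by rewrite !mulmxDl !mulmxDr -!scalemxAl -!scalemxAr !mxtraceD !mxtraceZ !mulmxA; ring.
Qed.

Lemma is_derive_quadratic (R : realType) (a b c : R) :
  is_derive (0 : R) (1 : R) (fun t : R => a + t * b + t ^+ 2 * c) b.
Proof.
pose p : {poly R} := a%:P + b%:P * 'X + c%:P * 'X * 'X.
have -> : (fun t : R => a + t * b + t ^+ 2 * c) = horner p.
  by apply/funext => t; rewrite !hornerD hornerC !hornerMX !hornerC; ring.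
have -> : b = p^`().[0].
  rewrite !derivD derivC !derivM !derivC derivX.
  by rewrite !(hornerD, hornerMX, hornerC, hornerX, hornerM); ring.
exact: is_derive_poly.
Qed.

Section CycleIndices.
Variable n' : nat.
Local Notation n := n'.+1.
Hypothesis hn : (2 <= n')%N.

Lemma ordS_neq (i : 'I_n) : (ordS i == i) = false.
Proof.
apply/negbTE/eqP => /(congr1 val) /= e; have hi := ltn_ord i.
have [h|h] := ltnP i.+1 n; first by move: e; rewrite modn_small //; lia.
have ei : i.+1 = n by lia.
by move: e; rewrite ei modnn; lia.
Qed.

Lemma ordS_ordS_neq (i : 'I_n) : (i == ordS (ordS i)) = false.
Proof.
apply/negbTE/eqP => /(congr1 val) /= e; have hi := ltn_ord i.
have [h|h] := ltnP i.+1 n; last first.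
  have ei : i.+1 = n by lia.
  by move: e; rewrite ei modnn modn_small; lia.
move: e; rewrite (modn_small h); have [h2|h2] := ltnP i.+2 n.
  by rewrite modn_small //; lia.
have ei : i.+2 = n by lia.
by rewrite ei modnn; lia.
Qed.

End CycleIndices.

Section UniformCycle.
Variable R : realType.
Variable n' : nat.
Local Notation n := n'.+1.
Hypothesis hn : (2 <= n')%N.
Variable A : 'M[R]_3.
Local Notation B := (Rtilde_blk (fun _ : 'I_n => A)).

(* For n >= 3 the diagonal and the two off-diagonal positions are disjoint,
   so each block is a sum of three indicator terms. *)
Lemma Rtilde_uniformE (i j : 'I_n) : B i j =
  (if i == j then 1%:M else 0) + (if j == ordS i then A else 0)
  + (if i == ordS j then A^T else 0).
Proof.
rewrite /Rtilde_blk; case: (i =P j) => [<-|_]; first by rewrite eq_sym ordS_neq // !addr0.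
case: (j =P ordS i) => [->|_]; first by rewrite ordS_ordS_neq // add0r addr0.
by case: (i =P ordS j) => _; rewrite !add0r.
Qed.

Lemma sum_pick (k : 'I_n) (M : 'M[R]_3) : \sum_(j < n) (if j == k then M else 0) = M.
Proof. by rewrite -big_mkcond big_pred1_eq. Qed.

Lemma sum_pick_sym (k : 'I_n) (M : 'M[R]_3) : \sum_(j < n) (if k == j then M else 0) = M.
Proof. by rewrite -[RHS](sum_pick k); apply: eq_bigr => j _; rewrite eq_sym. Qed.

Lemma sum_pick_pred (k : 'I_n) (M : 'M[R]_3) :
  \sum_(j < n) (if k == ordS j then M else 0) = M.
Proof.
rewrite -[RHS](sum_pick (ord_pred k)); apply: eq_bigr => j _.
by have -> : (k == ordS j) = (j == ord_pred k)
  by apply/eqP/eqP => [->|->]; [rewrite ordSK | rewrite ord_predK].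
Qed.

Lemma Rtilde_uniform_rowsum (i : 'I_n) : \sum_j B i j = 1%:M + A + A^T.
Proof.
by rewrite (eq_bigr _ (fun j _ => Rtilde_uniformE i j)) !big_split /=
  sum_pick_sym sum_pick sum_pick_pred.
Qed.

Lemma Rtilde_uniform_colsum (j : 'I_n) : \sum_i B i j = 1%:M + A + A^T.
Proof.
by rewrite (eq_bigr _ (fun i _ => Rtilde_uniformE i j)) !big_split /=
  sum_pick sum_pick_pred sum_pick.
Qed.

End UniformCycle.

Section GaugeUniform.
Variable R : realType.
Variable n' : nat.
Local Notation n := n'.+1.
Hypothesis hn : (2 <= n')%N.
Variables (meas : 'I_n -> 'M[R]_3) (A : 'M[R]_3) (X : 'I_n -> 'M[R]_3).
Hypothesis hgauge : forall i j,
  (X i)^T *m Rtilde_blk meas i j *m X j = Rtilde_blk (fun _ => A) i j.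

Lemma cost_gauge_uniform : cost meas X = - (n%:R * (3 + 2 * \tr A)).
Proof.
rewrite /cost (eq_bigr (fun i => \tr (1%:M + A + A^T))).
  by rewrite sumr_const card_ord !mxtraceD mxtrace1 mxtrace_tr -mulr_natl; ring.
move=> i _; rewrite -(Rtilde_uniform_rowsum hn A i) raddf_sum.
by apply: eq_bigr => j _; rewrite hgauge.
Qed.

Lemma stationary_gauge_uniform (W : 'I_n -> 'M[R]_3) : (forall i, Defs.skew (W i)) ->
  is_derive (0 : R) (1 : R) (fun t : R => cost meas (fun i => X i + t *: (X i *m W i))) 0.
Proof.
move=> hW; pose B := Rtilde_blk (fun _ : 'I_n => A).
have hS : (1%:M + A + A^T)^T = 1%:M + A + A^T.
  by rewrite !linearD /= trmxK trmx1 addrAC.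
have row_term i : \sum_j \tr ((W i)^T *m B i j) = 0.
  rewrite -raddf_sum /= -mulmx_sumr Rtilde_uniform_rowsum // -mxtrace_tr trmx_mul trmxK hS.
  exact: mxtrace_sym_skew hS (hW i).
have col_term j : \sum_i \tr (B i j *m W j) = 0.
  rewrite -raddf_sum /= -mulmx_suml Rtilde_uniform_colsum //.
  exact: mxtrace_sym_skew hS (hW j).
have first_order :
    \sum_i \sum_j (\tr ((W i)^T *m B i j) + \tr (B i j *m W j)) = 0.
  under eq_bigr do rewrite big_split.
  rewrite big_split /= [X in _ + X]exchange_big /=.
  rewrite (eq_bigr _ (fun i _ => row_term i)) (eq_bigr _ (fun j _ => col_term j)).
  by rewrite !big1_eq addr0.
have -> : (fun t : R => cost meas (fun i => X i + t *: (X i *m W i))) =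
    fun t => - (\sum_i \sum_j \tr (B i j)) + t * 0
             + t ^+ 2 * - (\sum_i \sum_j \tr ((W i)^T *m B i j *m W j)).
  apply/funext => t; rewrite /cost.
  under eq_bigr do under eq_bigr do rewrite mxtrace_expand hgauge.
  under eq_bigr do rewrite !big_split /= -!mulr_sumr.
  by rewrite !big_split /= -!mulr_sumr first_order /B; ring.
exact: (is_derive_quadratic _ 0 _).
Qed.

End GaugeUniform.

Section Candidate.
Variable R : realType.
Variable n' : nat.
Local Notation n := n'.+1.
Variable meas : 'I_n -> 'M[R]_3.
Hypothesis hmeas : forall i, SO3 (meas i).
Variable Ek : 'M[R]_3.
Hypothesis hEk : orthogonal Ek.
Hypothesis hEdet : \det Ek = 1.
Hypothesis hEn : Ek ^+ n = cycle_error meas.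

Definition path_prod (i : nat) : 'M[R]_3 := \prod_(s < n | (s < i)%N) meas s.

Lemma path_prodE i : (i <= n)%N -> path_prod i = \prod_(0 <= s < i) meas (inord s).
Proof.
move=> hi; rewrite /path_prod big_mkord (big_ord_widen n (fun s => meas (inord s)) hi).
by apply: eq_bigr => s _; rewrite inord_val.
Qed.

Lemma path_prod0 : path_prod 0 = 1%:M.
Proof. by rewrite path_prodE // big_geq. Qed.

Lemma path_prodS i : (i < n)%N -> path_prod i.+1 = path_prod i *m meas (inord i).
Proof.
by move=> hi; rewrite (path_prodE hi) (path_prodE (ltnW hi)) big_nat_recr.
Qed.

Lemma path_prod_orth i : (i <= n)%N -> orthogonal (path_prod i).
Proof.
elim: i => [|i IH] hi; first by rewrite path_prod0; exact: orthogonal1.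
by rewrite path_prodS //; apply: orthogonalM; [apply: IH; exact: ltnW | exact: (hmeas _).1].
Qed.

Lemma path_prod_det i : (i <= n)%N -> \det (path_prod i) = 1.
Proof.
elim: i => [|i IH] hi; first by rewrite path_prod0 det1.
by rewrite path_prodS // det_mulmx IH ?(hmeas _).2 ?mulr1 // ltnW.
Qed.

Lemma cycle_error_path : cycle_error meas = path_prod n' *m meas (inord n').
Proof.
rewrite -path_prodS // /path_prod /cycle_error.
by apply: eq_bigl => s; rewrite ltn_ord.
Qed.

Definition gauge (i : nat) : 'M[R]_3 := (path_prod i)^T *m Ek ^+ i.

Lemma candidateE (i : 'I_n) : candidate meas Ek i = gauge i.
Proof. by rewrite /candidate /gauge; case: eqP => // ->; rewrite path_prod0 trmx1 expr0 mul1mx. Qed.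

Lemma gauge_SO3 i : (i <= n)%N -> SO3 (gauge i).
Proof.
move=> hi; split.
  by apply: orthogonalM; [apply/orthogonal_tr/path_prod_orth | exact: orthogonalX].
rewrite /gauge det_mulmx det_tr path_prod_det // mul1r.
elim: i hi => [|i IH] hi; first by rewrite expr0 det1.
by rewrite exprS -mulmxE det_mulmx hEdet IH ?mul1r // ltnW.
Qed.

Lemma Ek_step i : (Ek ^+ i)^T *m Ek ^+ i.+1 = Ek.
Proof. by rewrite exprSr -mulmxE mulmxA orthogonalX // mul1mx. Qed.

Lemma gauge_edge (i : 'I_n) : (gauge i)^T *m meas i *m gauge (ordS i) = Ek.
Proof.
rewrite /gauge trmx_mul trmxK; case: (ltnP i.+1 n) => h.
  have -> : (ordS i : nat) = i.+1 by rewrite /= modn_small.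
  rewrite path_prodS // inord_val -(mulmxA _ (path_prod i)) mulmxA.
  rewrite -(mulmxA _ (path_prod i *m meas i)) orthogonal_mulC ?mulmx1 ?Ek_step //.
  by apply: orthogonalM; [apply: path_prod_orth; exact: ltnW | exact: (hmeas _).1].
have ei : i = inord n' by apply/val_inj; rewrite /= inordK //; have := ltn_ord i; lia.
have -> : (ordS i : nat) = 0%N by rewrite /= ei inordK // modnn.
rewrite path_prod0 trmx1 expr0 mulmx1 ei inordK // mulmx1 -mulmxA -cycle_error_path -hEn.
exact: Ek_step.
Qed.

Lemma gauge_blocks (i j : 'I_n) :
  (gauge i)^T *m Rtilde_blk meas i j *m gauge j = Rtilde_blk (fun _ => Ek) i j.
Proof.
rewrite /Rtilde_blk; case: (i =P j) => [<-|_].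
  by rewrite mulmx1; apply: (gauge_SO3 _).1; exact: ltnW.
case: (j =P ordS i) => [->|_]; first exact: gauge_edge.
case: (i =P ordS j) => [->|_]; last by rewrite mulmx0 mul0mx.
have := congr1 trmx (gauge_edge j).
by rewrite [LHS]trmx_mul [X in _ *m X]trmx_mul trmxK mulmxA => <-.
Qed.

End Candidate.

Theorem mainTheorem5 (R : realType) (n : nat) (hn : (3 <= n)%N)
  (meas : 'I_n -> 'M[R]_3) (hmeas : forall i, SO3 (meas i))
  (u : 'cV[R]_3) (gamma : R)
  (hu : unit_vec u) (hgamma : - pi <= gamma <= pi)
  (hE : cycle_error meas = expso3 u gamma)
  (k : nat) (hk : (k < n)%N) :
  let Ek := expso3 u (gamma / n%:R - 2 * k%:R * pi / n%:R) in
  let X := candidate meas Ek in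
  stationary (cost meas) X /\
  cost meas X = - 3 * n%:R - 2 * n%:R * \tr Ek /\
  cost meas X = - 3 * n%:R - 2 * n%:R * (1 + 2 * cos (gamma / n%:R - 2 * k%:R * pi / n%:R)).
Proof.
move=> Ek Xc; case: n => [|n'] in hn meas hmeas hE hk Ek Xc *; first by [].
set theta := gamma / n'.+1%:R - 2 * k%:R * pi / n'.+1%:R.
(* E_k is an n-th root of the cycle error, since n theta = gamma - 2 k pi. *)
have hEn : Ek ^+ n'.+1 = cycle_error meas.
  rewrite hE /Ek expso3X //.
  have -> : n'.+1%:R * theta = gamma - (pi *+ 2) *+ k.
    by rewrite /theta -mulr_natr; field; rewrite addrC natr1 pnatr_eq0.
  have shift (f : R -> R) : periodic f (pi *+ 2) -> f (gamma - (pi *+ 2) *+ k) = f gamma.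
    by move=> hf; rewrite -(periodicn hf k) subrK.
  by rewrite /expso3 (shift _ (@sinD2pi R)) (shift _ (@cosD2pi R)).
have hX : Xc = fun i => gauge meas Ek i by apply/funext => i; exact: candidateE.
have hEk : orthogonal Ek := expso3_orth hu _.
have hEdet : \det Ek = 1 := expso3_det hu _.
have hgauge := gauge_blocks hmeas hEk hEdet hEn.
have hcost := cost_gauge_uniform hn hgauge.
rewrite hX hcost; split; [split|split].
- by move=> i; exact (gauge_SO3 hmeas hEk hEdet (ltnW (ltn_ord i))).
- by move=> W hW; exact: stationary_gauge_uniform.
- by ring.
- by rewrite expso3_trace //; ring.
Qed.
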